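(* Let $n \geq 1$ and let $A=(a_{\{i,j\}})$ and $B=(b_{\{i,j\}})$ be real symmetric $n\times n$ matrices, regarded as having $2n+2\binom{n}{2}$ independent commuting indeterminates $a_{\{i,j\}}, b_{\{i,j\}}$ ($\{i,j\}\subseteq[n]$, $1\le |\{i,j\}|\le 2$) as entries. Define: - $z_1$: the vector indexed by the subsets $S\subseteq [n]$ with $|S|\in\{1,2\}$ whose $S$-entry is $a_S b_S$ (so the $\{i\}$-entry is $a_{\{i,i\}}b_{\{i,i\}}$); - $Q_1$: the $(n+\binom n2)\times(n+\binom n2)$ matrix indexed by the same subsets, with $(S,S')$-entry $6\,|S\cap S'|$; - for $1\le i<j\le n$, $z_{2,(i,j)}\in\mathbb{R}[a,b]^{2n}$: the vector whose $k$-th entry is $a_{\{i,k\}}b_{\{j,k\}}$ and whose $(n+k)$-th entry is $a_{\{j,k\}}b_{\{i,k\}}$, for $k=1,\dots,n$; - $Q_2$: the $2n\times 2n$ block matrix $\begin{pmatrix}4J_n & 2J_n\\ 2J_n & 4J_n\end{pmatrix}$, where $J_n$ is the $n\times n$ all-ones matrix. Then $Q_1$ and $Q_2$ are positive semidefinite, and the coefficient of $t^2$ in $\operatorname{trace}((A+tB)^4)$ equals, as a polynomial identity, $$z_1^TQ_1z_1+\sum_{1\le i<j\le n} z_{2,(i,j)}^TQ_2\,z_{2,(i,j)}.$$ In particular this coefficient is a sum of squares of polynomials in the entries of $A$ and $B$, and hence is non-negative for all real symmetric $n\times n$ matrices $A,B$.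
   Context: $[n]=\{1,\dots,n\}$. The entry of a symmetric matrix in positions $(i,j)$ and $(j,i)$ is denoted by a single symbol indexed by the unordered set $\{i,j\}$; e.g. $a_{\{i,i\}}$ is the $(i,i)$ diagonal entry of $A$. The coefficient of $t^r$ in $\operatorname{trace}((A+tB)^m)$ is taken with $t$ a scalar indeterminate. *)

From HB Require Import structures.
From mathcomp Require Import all_boot all_order all_algebra.
Set Implicit Arguments. Unset Strict Implicit. Unset Printing Implicit Defensive.
Import Order.TTheory GRing.Theory Num.Theory.
Local Open Scope ring_scope.

(* Index type for the subsets S of [n] with |S| in {1,2}:
   the pair (i,j) with i <= j encodes S = {i,j}. *)
Definition subidx (n : nat) := {p : 'I_n * 'I_n | (p.1 <= p.2)%N}.

Definition subset_of (n : nat) (p : subidx n) : {set 'I_n} :=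
  [set (val p).1; (val p).2].

Definition qform (R : pzRingType) (I : finType) (Q : I -> I -> R) (z : I -> R) : R :=
  \sum_(i : I) \sum_(j : I) z i * Q i j * z j.

Definition psd (R : numDomainType) (I : finType) (Q : I -> I -> R) : Prop :=
  (forall i j, Q i j = Q j i) /\ (forall z : I -> R, 0 <= qform Q z).

Definition z1 (R : pzRingType) (n : nat) (A B : 'M[R]_n) (p : subidx n) : R :=
  A (val p).1 (val p).2 * B (val p).1 (val p).2.

Definition Q1 (R : pzRingType) (n : nat) (p q : subidx n) : R :=
  (6 * #|subset_of p :&: subset_of q|)%:R.

Definition Jn (R : pzRingType) (n : nat) : 'M[R]_n := const_mx 1.
Definition Q2 (R : pzRingType) (n : nat) : 'M[R]_(n + n) :=
  block_mx (4 *: Jn R n) (2 *: Jn R n) (2 *: Jn R n) (4 *: Jn R n).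

Definition z2 (R : pzRingType) (n : nat) (A B : 'M[R]_n) (i j : 'I_n) : 'cV[R]_(n + n) :=
  col_mx (\col_k (A i k * B j k)) (\col_k (A j k * B i k)).

Definition coef_t2 (R : comNzRingType) (n : nat) (A B : 'M[R]_n) : R :=
  (\tr ((map_mx polyC A + 'X *: map_mx polyC B) ^+ 4))`_2.

(* Write C = A B.  Expanding (A + tB)^4 and rotating traces, the t^2 coefficient
   is 4 tr(BA AB) + 2 tr(AB AB); for symmetric A, B we have BA = C^T, so it equals
   4 sum_{i,j} C_ji^2 + 2 sum_{i,j} C_ij C_ji
   = sum_k 6 C_kk^2 + sum_{i<j} (3 (C_ij + C_ji)^2 + (C_ij - C_ji)^2).
   Both Q_1 and Q_2 are Gram matrices with nonnegative weights, which gives their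
   positive semidefiniteness, and their quadratic forms reproduce exactly these
   squares: Q_1 = 6 sum_k e_k e_k^T with (e_k)_S = [k in S], and
   <e_k, z_1> = sum_{S containing k} a_S b_S = C_kk; Q_2 = 3 1 1^T + s s^T with
   s = (1,...,1,-1,...,-1), and the two halves of z_{2,(i,j)} sum to C_ij and C_ji. *)

From HB Require Import structures.
From mathcomp Require Import all_boot all_order all_algebra.
From mathcomp Require Import ring.
Set Implicit Arguments.
Unset Strict Implicit.
Unset Printing Implicit Defensive.

Import Order.TTheory GRing.Theory Num.Theory.
Local Open Scope ring_scope.

Lemma qform_gram (R : comPzRingType) (I K : finType) (Q : I -> I -> R)
    (c : K -> R) (u : K -> I -> R) :
  (forall i j, Q i j = \sum_k c k * (u k i * u k j)) ->
  forall z, qform Q z = \sum_k c k * (\sum_i u k i * z i) ^+ 2.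
Proof.
move=> QE z; rewrite /qform.
under eq_bigr => i _ do under eq_bigr => j _ do rewrite QE mulr_sumr mulr_suml.
under eq_bigr => i _ do rewrite exchange_big.
rewrite exchange_big; apply: eq_bigr => k _.
rewrite expr2 big_distrl mulr_sumr; apply: eq_bigr => i _.
rewrite big_distrr mulr_sumr; apply: eq_bigr => j _ /=; ring.
Qed.

Lemma gram_psd (R : realDomainType) (I K : finType) (Q : I -> I -> R)
    (c : K -> R) (u : K -> I -> R) :
  (forall k, 0 <= c k) ->
  (forall i j, Q i j = \sum_k c k * (u k i * u k j)) -> psd Q.
Proof.
move=> c_ge0 QE; split=> [i j | z].
  by rewrite !QE; apply: eq_bigr => k _; rewrite (mulrC (u k i)).
rewrite (qform_gram QE); apply: sumr_ge0 => k _.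
exact: mulr_ge0 (c_ge0 k) (sqr_ge0 _).
Qed.

Lemma Q1_gram (R : comPzRingType) (n : nat) (p q : subidx n) :
  @Q1 R n p q = \sum_(k < n) 6 * ((k \in subset_of p)%:R * (k \in subset_of q)%:R).
Proof.
rewrite /Q1 natrM -mulr_sumr -sum1_card natr_sum big_mkcond /=.
congr (_ * _); apply: eq_bigr => k _.
by rewrite in_setI; case: (k \in subset_of p); case: (k \in subset_of q);
  rewrite /= ?mulr1 ?mulr0.
Qed.

Lemma Q2_gram (R : comPzRingType) (n : nat) (k l : 'I_(n + n)) :
  @Q2 R n k l = \sum_(b : bool) (if b then 3 else 1) *
    ((-1) ^+ (~~ b && (n <= k)%N) * (-1) ^+ (~~ b && (n <= l)%N)).
Proof.
have lo (j : 'I_n) : (n <= lshift n j)%N = false by rewrite leqNgt /= ltn_ord.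
have hi (j : 'I_n) : (n <= rshift n j)%N by rewrite leq_addr.
rewrite big_bool /=.
case: (split_ordP k) => {}k ->; case: (split_ordP l) => {}l ->;
  rewrite /Q2 ?block_mxEul ?block_mxEur ?block_mxEdl ?block_mxEdr !mxE ?lo ?hi /=;
  ring.
Qed.

Lemma psd_Q1 (R : realFieldType) (n : nat) : psd (@Q1 R n).
Proof. by apply: gram_psd (@Q1_gram R n) => k. Qed.

Lemma psd_Q2 (R : realFieldType) (n : nat) : psd (fun k l => @Q2 R n k l).
Proof. by apply: gram_psd (@Q2_gram R n) => -[]. Qed.

Lemma sum_ord_pairs (V : nmodType) (n : nat) (F : 'I_n -> 'I_n -> V) :
  \sum_(i < n) \sum_(j < n) F i j =
  \sum_(i < n) F i i + \sum_(i < n) \sum_(j < n | (i < j)%N) (F i j + F j i).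
Proof.
have split_row i : \sum_(j < n) F i j =
    F i i + \sum_(j < n | (i < j)%N) F i j + \sum_(j < n | (j < i)%N) F i j.
  rewrite (bigD1 i) //= -addrA (bigID (fun j : 'I_n => (i < j)%N)) /=.
  by congr (_ + (_ + _)); apply: eq_bigl => j; rewrite -val_eqE /=;
    case: ltngtP.
rewrite (eq_bigr _ (fun i _ => split_row i)) !big_split /= -addrA; congr (_ + _).
under [RHS]eq_bigr => i _ do rewrite big_split.
rewrite [RHS]big_split /=; congr (_ + _).
rewrite (eq_bigr _ (fun i _ => big_mkcond _ _)) exchange_big /=.
by apply: eq_bigr => i _; rewrite [RHS]big_mkcond.
Qed.

Lemma sum_subidx (V : nmodType) (n : nat) (F : 'I_n * 'I_n -> V) :
  \sum_(p : subidx n) F (val p) =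
  \sum_(i < n) F (i, i) + \sum_(i < n) \sum_(j < n | (i < j)%N) F (i, j).
Proof.
have -> : \sum_(p : subidx n) F (val p) =
    \sum_(i < n) \sum_(j < n | (i <= j)%N) F (i, j).
  rewrite pair_big_dep [RHS](reindex_omap (val : subidx n -> _) insub) /=.
    apply: eq_big => [p|p _]; last by case: (val p).
    by rewrite (valP p) valK eqxx.
  by move=> x Px; rewrite insubT.
rewrite -big_split /=.
apply: eq_bigr => i _; rewrite (bigD1 i) //=; congr (_ + _).
by apply: eq_bigl => j; rewrite ltn_neqAle andbC eq_sym.
Qed.

Lemma expr4_addZ (S : comNzRingType) (n : nat) (x : S) (P Q : 'M[S]_n) :
  (P + x *: Q) ^+ 4 =
  P * P * P * P + x *: (P * P * P * Q) + x *: (P * P * Q * P) +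
  x ^+ 2 *: (P * P * Q * Q) + x *: (P * Q * P * P) +
  x ^+ 2 *: (P * Q * P * Q) + x ^+ 2 *: (P * Q * Q * P) +
  x ^+ 3 *: (P * Q * Q * Q) + x *: (Q * P * P * P) +
  x ^+ 2 *: (Q * P * P * Q) + x ^+ 2 *: (Q * P * Q * P) +
  x ^+ 3 *: (Q * P * Q * Q) + x ^+ 2 *: (Q * Q * P * P) +
  x ^+ 3 *: (Q * Q * P * Q) + x ^+ 3 *: (Q * Q * Q * P) +
  x ^+ 4 *: (Q * Q * Q * Q).
Proof.
rewrite !exprS !expr0 !mulr1 !mulrDl !mulrDr !mulrA -!mulmxE.
by rewrite -!(scalemxAl, scalemxAr) !scalerA !addrA.
Qed.

Lemma mxtrace_mul_sum (R : pzSemiRingType) (m n : nat) (M : 'M[R]_(m, n))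
    (N : 'M[R]_(n, m)) :
  \tr (M *m N) = \sum_(i < m) \sum_(j < n) M i j * N j i.
Proof. by apply: eq_bigr => i _; rewrite mxE. Qed.

Lemma mxtrace_rot (R : comPzRingType) (n : nat) (M N K L : 'M[R]_n) :
  \tr (M *m N *m K *m L) = \tr (N *m K *m L *m M).
Proof. by rewrite -!mulmxA mxtrace_mulC !mulmxA. Qed.

Lemma coef_t2E (R : comNzRingType) (n : nat) (A B : 'M[R]_n) :
  coef_t2 A B = 4 * \tr ((B *m A) *m (A *m B)) + 2 * \tr ((A *m B) *m (A *m B)).
Proof.
rewrite /coef_t2 expr4_addZ !mxtraceD !mxtraceZ -!mulmxE -!map_mxM !trace_map_mx.
rewrite !coefD !coefXM !coefXnM !coefC /= !mulmxA.
rewrite (mxtrace_rot A A B B) (mxtrace_rot A B B A) (mxtrace_rot B B A A).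
rewrite (mxtrace_rot B A B A); ring.
Qed.

Section SymmetricPair.

Variables (R : comNzRingType) (n : nat) (A B : 'M[R]_n).
Hypotheses (symA : A^T = A) (symB : B^T = B).
Local Notation C := (A *m B).

Let A_sym i j : A i j = A j i. Proof. by rewrite -{1}symA mxE. Qed.
Let B_sym i j : B i j = B j i. Proof. by rewrite -{1}symB mxE. Qed.

Lemma coef_t2_sym : coef_t2 A B =
  \sum_(i < n) 6 * C i i ^+ 2 +
  \sum_(i < n) \sum_(j < n | (i < j)%N)
     (3 * (C i j + C j i) ^+ 2 + (C i j - C j i) ^+ 2).
Proof.
have BA : B *m A = C^T by rewrite trmx_mul symA symB.
rewrite coef_t2E BA !mxtrace_mul_sum !mulr_sumr -big_split /=.
under eq_bigr => i _ do rewrite !mulr_sumr -big_split /=.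
rewrite sum_ord_pairs; congr (_ + _); apply: eq_bigr => i _.
  by rewrite !mxE; ring.
by apply: eq_bigr => j _; rewrite !mxE; ring.
Qed.

Lemma sum_z1 (k : 'I_n) :
  \sum_(p : subidx n) (k \in subset_of p)%:R * z1 A B p = C k k.
Proof.
rewrite /z1 /subset_of
  (sum_subidx (fun x => (k \in [set x.1; x.2])%:R * (A x.1 x.2 * B x.1 x.2))) mxE.
have -> : \sum_(j < n) A k j * B j k =
    \sum_(i < n) \sum_(j < n) (i == k)%:R * (A i j * B i j).
  rewrite [RHS](bigD1 k) //= [X in _ = _ + X]big1 ?addr0; last first.
    by move=> i /negbTE ->; apply: big1 => j _; rewrite mul0r.
  by rewrite eqxx; apply: eq_bigr => j _; rewrite mul1r B_sym.
rewrite sum_ord_pairs; congr (_ + _).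
  by apply: eq_bigr => i _; rewrite /= in_set2 orbb eq_sym.
apply: eq_bigr => i _; apply: eq_bigr => j lt_ij /=.
rewrite in_set2 (A_sym j i) (B_sym j i) -mulrDl (eq_sym i k) (eq_sym j k).
congr (_ * _); case: eqVneq => [->|_] /=; last by rewrite add0r.
by rewrite -val_eqE (ltn_eqF lt_ij) addr0.
Qed.

Lemma qform_Q1_z1 : qform (@Q1 R n) (z1 A B) = \sum_(k < n) 6 * C k k ^+ 2.
Proof.
by rewrite (qform_gram (@Q1_gram R n)); apply: eq_bigr => k _; rewrite sum_z1.
Qed.

Lemma qform_Q2_z2 (i j : 'I_n) :
  qform (fun k l => @Q2 R n k l) (fun k => z2 A B i j k 0) =
  3 * (C i j + C j i) ^+ 2 + (C i j - C j i) ^+ 2.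
Proof.
have sum_lo (s : bool) : \sum_(k < n)
    (-1) ^+ (s && (n <= lshift n k)%N) * z2 A B i j (lshift n k) 0 = C i j.
  rewrite mxE; apply: eq_bigr => k _.
  by rewrite leqNgt /= ltn_ord andbF expr0 mul1r col_mxEu mxE B_sym.
have sum_hi (s : bool) : \sum_(k < n)
    (-1) ^+ (s && (n <= rshift n k)%N) * z2 A B i j (rshift n k) 0 =
    (-1) ^+ s * C j i.
  rewrite mxE mulr_sumr; apply: eq_bigr => k _.
  by rewrite leq_addr andbT col_mxEd mxE B_sym.
rewrite (qform_gram (@Q2_gram R n)) big_bool !big_split_ord !sum_lo !sum_hi /=.
ring.
Qed.

Lemma coef_t2_sos : coef_t2 A B =
  qform (@Q1 R n) (z1 A B) +
  \sum_(i < n) \sum_(j < n | (i < j)%N)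
     qform (fun k l => @Q2 R n k l) (fun k => z2 A B i j k 0).
Proof.
rewrite coef_t2_sym qform_Q1_z1; congr (_ + _).
by apply: eq_bigr => i _; apply: eq_bigr => j _; rewrite qform_Q2_z2.
Qed.

End SymmetricPair.

Theorem theorem2 (n : nat) (hn : (0 < n)%N) :
  (forall R : realFieldType, psd (@Q1 R n) /\ psd (fun k l => @Q2 R n k l)) /\
  (forall (R : comNzRingType) (A B : 'M[R]_n), A^T = A -> B^T = B ->
     coef_t2 A B =
       qform (@Q1 R n) (z1 A B) +
       \sum_(i < n) \sum_(j < n | (i < j)%N)
          qform (fun k l => @Q2 R n k l) (fun k => z2 A B i j k 0)) /\
  (forall (R : realFieldType) (A B : 'M[R]_n), A^T = A -> B^T = B ->
     0 <= coef_t2 A B).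
Proof.
split; first by move=> R; split; [exact: psd_Q1 | exact: psd_Q2].
split; first by move=> R A B; exact: coef_t2_sos.
move=> R A B symA symB; rewrite coef_t2_sos //.
apply: addr_ge0; first exact: (psd_Q1 R n).2.
by apply: sumr_ge0 => i _; apply: sumr_ge0 => j _; exact: (psd_Q2 R n).2.
Qed.
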